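(* Let $X,Y$ be topological spaces, $U$ an abelian group, $f\colon[X,Y]\to U$ a map, and $\bar f\colon\mathbb Z[[X,Y]]\to U$ the homomorphism with $\bar f(e_w)=f(w)$. For $r\in\mathbb N$, the condition $\operatorname{ord}f\le r$ is equivalent to: $\bar f([A])=0$ for every $A\in\mathbb Z[C(X,Y)]$ with $\theta(A)>r$.
   Context: $\mathbb Z[S]$ is the free abelian group on a set $S$ with basis $e_x$. For $A=\sum m_ae_a\in\mathbb Z[C(X,Y)]$, $[A]=\sum m_ae_{[a]}\in\mathbb Z[[X,Y]]$, $A|_V=\sum m_ae_{a|_V}$, and $\theta(A)=\inf\{\#V:V\subset X\text{ finite},A|_V\ne0\}$. Order: let $E_r$ be the group of functions $(X\times Y)^r\to\mathbb Z$, $I_r(a)$ the characteristic function of $\Gamma_a^r$ ($\Gamma_a$ the graph of $a$), $D_r\subset E_r$ the subgroup generated by all $I_r(a)$; $\operatorname{ord}f$ is the infimum of $r\in\mathbb N$ such that there is a homomorphism $l\colon D_r\to U$ with $f([a])=l(I_r(a))$ for all $a\in C(X,Y)$. *)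

From HB Require Import structures.
From mathcomp Require Import all_boot all_order all_algebra.
From mathcomp Require Import all_classical all_reals.
From mathcomp Require Import topology.
From mathcomp Require Import Rstruct Rstruct_topology.

Set Implicit Arguments.
Unset Strict Implicit.
Unset Printing Implicit Defensive.
Import Order.TTheory GRing.Theory Num.Theory.
Local Open Scope ring_scope.
Local Open Scope classical_set_scope.

Section Defs.
Variables (X Y : topologicalType).

Definition CXY := continuousType X Y.

Definition homotopic (a b : CXY) : Prop :=
  exists H : X * Rdefinitions.R -> Y,
    {within [set: X] `*` [set` `[0%R, 1%R]], continuous H} /\
    (forall x, H (x, 0%R) = a x) /\ (forall x, H (x, 1%R) = b x).

(* Elements of Z[C(X,Y)] represented as formal sums  sum m_a e_a,
   i.e. finite lists of pairs (m_a, a). *)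
Definition formal := seq (int * CXY).

Definition fbar (U : zmodType) (f : CXY -> U) (A : formal) : U :=
  \sum_(c <- A) (f c.2 *~ c.1).

Definition agree_on (V : seq X) (a g : X -> Y) : bool :=
  `[< forall x, x \in V -> a x = g x >].

(* A|_V = 0 in Z[C(V,Y)]: for every map g : V -> Y (given as a map on X,
   only its values on V matter), the coefficient of e_g in A|_V vanishes. *)
Definition restr_zero (A : formal) (V : seq X) : Prop :=
  forall g : X -> Y, \sum_(c <- A | agree_on V c.2 g) c.1 = 0.

(* theta(A) > r : every finite V subset X (a duplicate-free list) with
   A|_V <> 0 has more than r elements. *)
Definition theta_gt (A : formal) (r : nat) : Prop :=
  forall V : seq X, uniq V -> ~ restr_zero A V -> (r < size V)%N.

Definition tupr (r : nat) := 'I_r -> X * Y.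
Definition Er (r : nat) := tupr r -> int.

Definition Ir (r : nat) (a : X -> Y) : Er r :=
  fun p => if `[< forall i, (p i).2 = a (p i).1 >] then 1 else 0.

(* D_r : subgroup of E_r generated by the I_r(a), a in C(X,Y)
   (= the set of all finite Z-linear combinations). *)
Definition Dr (r : nat) : set (Er r) :=
  fun u => exists s : formal, u = fun p => \sum_(c <- s) c.1 * @Ir r c.2 p.

(* There is a homomorphism l : D_r -> U with f([a]) = l(I_r(a)).
   A homomorphism on D_r is given as a map on E_r additive on D_r. *)
Definition order_witness (U : zmodType) (f : CXY -> U) (r : nat) : Prop :=
  exists l : Er r -> U,
    (forall u v, Dr u -> Dr v -> l (fun p => u p + v p) = l u + l v) /\
    (forall a : CXY, f a = l (@Ir r a)).

(* ord f <= r, with ord f the infimum in N u {oo} of such r. *)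
Definition ord_le (U : zmodType) (f : CXY -> U) (r : nat) : Prop :=
  exists r', (r' <= r)%N /\ order_witness f r'.

End Defs.

From HB Require Import structures.
From mathcomp Require Import all_boot all_order all_algebra.
From mathcomp Require Import all_classical all_reals.
From mathcomp Require Import topology.
Set Implicit Arguments.
Unset Strict Implicit.
Unset Printing Implicit Defensive.
Import GRing.Theory.
Local Open Scope ring_scope.

(* For a formal sum A, the function I_r(A) = sum m_a I_r(a) on (X x Y)^r
   vanishes at a tuple p unless p lies on the graph of some g : X -> Y, and
   then its value is the coefficient of g|_V in A|_V, V being the set of first
   coordinates of p.  Every finite V of size at most r arises this way (except
   V = {} when r > 0, which is reduced to a one-point V), so theta(A) > r
   exactly when I_r(A) = 0, and the same vanishing follows for every r' <= r.
   Hence fbar kills all A with theta(A) > r iff it factors through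
   A |-> I_r(A), i.e. through a homomorphism on D_r; when X is empty one has to
   use r' = 0 instead, since then I_r(A) = 0 for every r > 0. *)

Lemma mulrzfctE (T : Type) (M : zmodType) (g : T -> M) (m : int) :
  g *~ m = (fun x => g x *~ m).
Proof.
case: m => n; first exact: natmulfctE.
by rewrite NegzE !mulrNz -!pmulrn opprfctE natmulfctE.
Qed.

Section AdditiveOn.
Variables (V W : zmodType) (S : set V) (l : V -> W).
Hypotheses (S0 : S 0) (SB : forall u v, S u -> S v -> S (u - v)).
Hypothesis lD : forall u v, S u -> S v -> l (u + v) = l u + l v.

Lemma S_opp u : S u -> S (- u).
Proof. by rewrite -sub0r; apply: SB. Qed.

Lemma S_add u v : S u -> S v -> S (u + v).
Proof. by move=> Su Sv; rewrite -[v]opprK; apply/SB/S_opp. Qed.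

Lemma S_mulrn u n : S u -> S (u *+ n).
Proof.
by move=> Su; elim: n => [|n IHn]; rewrite ?mulr0n // mulrS; apply: S_add.
Qed.

Lemma S_mulrz u m : S u -> S (u *~ m).
Proof.
move=> Su; case: m => n; rewrite ?NegzE ?mulrNz; last apply: S_opp.
all: exact: S_mulrn.
Qed.

Lemma additive_on0 : l 0 = 0.
Proof. by apply: (@addrI _ (l 0)); rewrite -lD // !addr0. Qed.

Lemma additive_onN u : S u -> l (- u) = - l u.
Proof.
move=> Su; apply/eqP; rewrite -addr_eq0 -lD ?addNr ?additive_on0 //.
exact: S_opp.
Qed.

Lemma additive_onMn u n : S u -> l (u *+ n) = l u *+ n.
Proof.
move=> Su; elim: n => [|n IHn]; first by rewrite !mulr0n additive_on0.
by rewrite !mulrS lD ?IHn //; apply: S_mulrn.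
Qed.

Lemma additive_onMz u m : S u -> l (u *~ m) = l u *~ m.
Proof.
move=> Su; case: m => n; first exact: additive_onMn.
by rewrite NegzE !mulrNz additive_onN ?additive_onMn //; apply: S_mulrn.
Qed.

Lemma additive_on_sum (I : Type) (s : seq I) (F : I -> V) :
  (forall i, S (F i)) -> l (\sum_(i <- s) F i) = \sum_(i <- s) l (F i).
Proof.
move=> SF; elim: s => [|i s IHs]; first by rewrite !big_nil additive_on0.
by rewrite !big_cons lD ?IHs //; apply: big_ind => //; apply: S_add.
Qed.

End AdditiveOn.

Section GraphIndicators.
Variables (X Y : topologicalType).

Definition Irsum (r : nat) (A : formal X Y) : Er X Y r :=
  fun p => \sum_(c <- A) c.1 * Ir c.2 p.
Arguments Irsum : clear implicits.

Definition formal_opp (A : formal X Y) : formal X Y :=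
  [seq (- c.1, c.2) | c <- A].

Lemma Irsum_cat r s t : Irsum r (s ++ t) = Irsum r s + Irsum r t.
Proof. by apply/funext => p; rewrite /Irsum big_cat. Qed.

Lemma Irsum_opp r s : Irsum r (formal_opp s) = - Irsum r s.
Proof.
apply/funext => p; rewrite opprfctE /Irsum big_map -sumrN.
by apply: eq_bigr => c _; rewrite mulNr.
Qed.

Lemma IrsumE r s : Irsum r s = \sum_(c <- s) Ir c.2 *~ c.1.
Proof.
apply/funext => p; rewrite fct_sumE /Irsum.
by apply: eq_bigr => c _; rewrite mulrzfctE mulrzz mulrC.
Qed.

Lemma fbar_cat (U : zmodType) (f : CXY X Y -> U) s t :
  fbar f (s ++ t) = fbar f s + fbar f t.
Proof. by rewrite /fbar big_cat. Qed.

Lemma fbar_opp (U : zmodType) (f : CXY X Y -> U) s :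
  fbar f (formal_opp s) = - fbar f s.
Proof.
by rewrite /fbar big_map -sumrN; apply: eq_bigr => c _; rewrite mulrNz.
Qed.

Lemma Dr0 r : Dr (0 : Er X Y r).
Proof. by exists [::]; apply/funext => p; rewrite big_nil. Qed.

Lemma Dr_sub r (u v : Er X Y r) : Dr u -> Dr v -> Dr (u - v).
Proof.
move=> [s ->] [t ->]; exists (s ++ formal_opp t).
by rewrite -[RHS]/(Irsum r _) Irsum_cat Irsum_opp.
Qed.

Lemma Ir_Irsum r (a : CXY X Y) : Ir a = Irsum r [:: (1, a)].
Proof. by apply/funext => p; rewrite /Irsum big_seq1 mul1r. Qed.

Lemma Dr_Ir r (a : CXY X Y) : Dr (@Ir X Y r a).
Proof. by rewrite Ir_Irsum; exists [:: (1, a)]. Qed.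

Lemma fbar_witness (U : zmodType) (f : CXY X Y -> U) r (l : Er X Y r -> U) :
  (forall u v, Dr u -> Dr v -> l (fun p => u p + v p) = l u + l v) ->
  (forall a : CXY X Y, f a = l (Ir a)) ->
  forall A, fbar f A = l (Irsum r A).
Proof.
move=> ladd lf A; have DrB := @Dr_sub r.
rewrite IrsumE (additive_on_sum (Dr0 r) DrB ladd) => [|c]; last first.
  exact/(S_mulrz (Dr0 r) DrB)/Dr_Ir.
apply: eq_bigr => c _.
by rewrite lf (additive_onMz (Dr0 r) DrB ladd) //; apply: Dr_Ir.
Qed.

Lemma order_witness_of_kernel (U : zmodType) (f : CXY X Y -> U) r :
  (forall A, Irsum r A = 0 -> fbar f A = 0) -> order_witness f r.
Proof.
move=> fbar_ker.
have fbar_wd s t : Irsum r s = Irsum r t -> fbar f s = fbar f t.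
  move=> st; apply/eqP; rewrite -subr_eq0 -fbar_opp -fbar_cat; apply/eqP.
  by apply: fbar_ker; rewrite Irsum_cat Irsum_opp st subrr.
pose l u := if pselect (exists s, u = Irsum r s) is left h
  then fbar f (projT1 (cid h)) else 0.
have lE s : l (Irsum r s) = fbar f s.
  rewrite /l; case: pselect => [h|[]]; last by exists s.
  by case: (cid h) => t /= /esym /fbar_wd.
exists l; split.
  move=> _ _ [s ->] [t ->].
  by rewrite -[X in l X]/(Irsum r s + Irsum r t) -Irsum_cat !lE fbar_cat.
by move=> a; rewrite Ir_Irsum lE /fbar big_seq1 mulr1z.
Qed.

Lemma agree_on_eq_mem (V W : seq X) : V =i W -> @agree_on X Y V =2 agree_on W.
Proof.
move=> VW a g; apply/asboolP/asboolP => agr x; last by rewrite VW; apply: agr.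
by rewrite -VW; apply: agr.
Qed.

Lemma restr_zero_eq_mem (A : formal X Y) (V W : seq X) :
  V =i W -> restr_zero A V -> restr_zero A W.
Proof.
move=> VW AV g; rewrite -[RHS](AV g).
by apply: eq_bigl => c; rewrite (agree_on_eq_mem VW).
Qed.

Lemma Irsum_graph r (A : formal X Y) (p : tupr X Y r) (g : X -> Y) :
  (forall i, (p i).2 = g (p i).1) ->
  Irsum r A p =
    \sum_(c <- A | agree_on [seq (p i).1 | i <- enum 'I_r] c.2 g) c.1.
Proof.
move=> pg; rewrite big_mkcond; apply: eq_bigr => c _.
have graphE : (forall i, (p i).2 = c.2 (p i).1) <->
    (forall x, x \in [seq (p i).1 | i <- enum 'I_r] -> c.2 x = g x).
  split=> [cp _ /mapP[i _ ->] | cg i]; first by rewrite -cp pg.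
  by rewrite pg cg //; apply: (map_f (fun j => (p j).1)); rewrite mem_enum.
rewrite /Ir /agree_on (asbool_equiv_eq graphE).
by case: `[< _ >]; rewrite ?mulr1 ?mulr0.
Qed.

Lemma Irsum_not_graph r (A : formal X Y) (p : tupr X Y r) :
  (forall g : X -> Y, ~ forall i, (p i).2 = g (p i).1) -> Irsum r A p = 0.
Proof.
by move=> np; rewrite /Irsum big1 // => c _; rewrite /Ir asboolF ?mulr0.
Qed.

Lemma restr_zero_of_theta_gt (A : formal X Y) r (V : seq X) :
  theta_gt A r -> (size V <= r)%N -> restr_zero A V.
Proof.
move=> thA Vr; apply: (restr_zero_eq_mem (mem_undup V)); apply: contrapT => nz.
have := thA _ (undup_uniq V) nz.
by rewrite ltnNge (leq_trans (size_undup V) Vr).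
Qed.

Lemma Irsum_eq0 r' r (A : formal X Y) :
  (r' <= r)%N -> theta_gt A r -> Irsum r' A = 0.
Proof.
move=> r'r thA; apply/funext => p.
have [[g pg] | np] :=
  pselect (exists g : X -> Y, forall i, (p i).2 = g (p i).1).
  rewrite (Irsum_graph _ pg) (restr_zero_of_theta_gt thA) //.
  by rewrite size_map size_enum_ord.
by rewrite Irsum_not_graph // => g pg; apply: np; exists g.
Qed.

Lemma restr_zero_of_Irsum r (A : formal X Y) (V : seq X) :
  Irsum r A = 0 -> (0 < size V <= r)%N -> restr_zero A V.
Proof.
case: V => [//|x0 V] A0 /andP[_ Vr] g; set W := x0 :: V.
pose p : tupr X Y r := fun i => (nth x0 W i, g (nth x0 W i)).
have pW : [seq (p i).1 | i <- enum 'I_r] =i W.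
  move=> x; apply/mapP/idP => [[i _ ->] | xW] /=.
    have [iW|Wi] := ltnP i (size W); first exact: mem_nth.
    by rewrite nth_default ?mem_head.
  have xr : (index x W < r)%N by rewrite (leq_trans _ Vr) ?index_mem.
  by exists (Ordinal xr); rewrite ?mem_enum //= nth_index.
transitivity (Irsum r A p); last by rewrite A0.
rewrite (@Irsum_graph _ _ _ g) //.
by apply: eq_bigl => c; rewrite (agree_on_eq_mem pW).
Qed.

Lemma restr_zero_nil_of_Irsum (A : formal X Y) :
  Irsum 0 A = 0 -> restr_zero A [::].
Proof.
move=> A0 g; have p : tupr X Y 0 by case.
transitivity (Irsum 0 A p); last by rewrite A0.
rewrite (@Irsum_graph _ _ _ g) => [|[]//].
apply: eq_bigl => c; congr agree_on.
by apply/esym/size0nil; rewrite size_map size_enum_ord.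
Qed.

Lemma restr_zero_nil (x : X) (A : formal X Y) :
  restr_zero A [:: x] -> restr_zero A [::].
Proof.
move=> Ax g; set L := undup [seq (c.2 : X -> Y) x | c : int * CXY X Y <- A].
have agree_x (c : int * CXY X Y) (y : Y) :
    agree_on [:: x] c.2 (fun=> y) = (c.2 x == y).
  apply/asboolP/eqP => [-> // | cxy z]; first exact: mem_head.
  by rewrite inE => /eqP ->.
rewrite (eq_bigl xpredT) => [|c]; last by apply/asboolP.
transitivity (\sum_(c <- A) \sum_(y <- L | y == c.2 x) c.1).
  apply: eq_big_seq => c cA; rewrite -big_filter filter_pred1_uniq.
  - by rewrite big_seq1.
  - exact: undup_uniq.
  by rewrite mem_undup; apply: (map_f (fun d : int * CXY X Y => d.2 x)).
rewrite (exchange_big_dep xpredT) // big1_seq // => y _.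
rewrite -[RHS](Ax (fun=> y)).
by apply: eq_bigl => c; rewrite agree_x eq_sym.
Qed.

Lemma theta_gt_of_Irsum (x0 : X) r (A : formal X Y) :
  Irsum r A = 0 -> theta_gt A r.
Proof.
move=> A0 V _ nz; rewrite ltnNge; apply/negP => Vr; apply: nz.
case: V Vr => [|x V] Vr; first last.
  by apply: restr_zero_of_Irsum A0 _; rewrite Vr.
case: r A0 {Vr} => [|r] A0; first exact: restr_zero_nil_of_Irsum.
by apply: (@restr_zero_nil x0); apply: restr_zero_of_Irsum A0 _.
Qed.

Lemma theta_gt_of_Irsum0 r (A : formal X Y) :
  (X -> False) -> Irsum 0 A = 0 -> theta_gt A r.
Proof.
move=> noX A0 [|x V] _ nz; last by case: (noX x).
by case: nz; apply: restr_zero_nil_of_Irsum.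
Qed.

End GraphIndicators.

Theorem mainTheorem15 (X Y : topologicalType) (U : zmodType)
  (f : CXY X Y -> U)
  (hf : forall a b : CXY X Y, homotopic a b -> f a = f b)
  (r : nat) :
  ord_le f r <-> (forall A : formal X Y, theta_gt A r -> fbar f A = 0).
Proof.
split=> [[r' [r'r [l [ladd lf]]]] A thA | fbar0].
  rewrite (fbar_witness ladd lf) (Irsum_eq0 r'r thA).
  exact: (additive_on0 (@Dr0 _ _ r') ladd).
have [[x0 _] | noX] := pselect (exists x : X, True).
  exists r; split=> //; apply: order_witness_of_kernel => A.
  by move/(theta_gt_of_Irsum x0)/fbar0.
exists 0%N; split=> //; apply: order_witness_of_kernel => A.
by move/(theta_gt_of_Irsum0 r (fun x => noX (ex_intro _ x I)))/fbar0.
Qed.
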